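(* There exist constants $c>0$ and $N$ such that every graph $G$ of order $n\ge N$ satisfies $$\mathrm{adim}(G)\ge \mathrm{bdim}(G)\ge c\log n.$$
   Context: $d(x,y)$ is the length of a shortest $x$–$y$ path, with $d(x,y)=\infty$ if $x,y$ lie in different components. For an integer $k\ge1$ let $d_k(x,y)=\min\{d(x,y),k+1\}$. A set $A\subseteq V(G)$ is an adjacency resolving set if for all distinct $x,y\in V(G)$ there is $z\in A$ with $d_1(x,z)\ne d_1(y,z)$. $\mathrm{adim}(G)$ is the minimum size of an adjacency resolving set. A function $f:V(G)\to\mathbb{Z}_{\ge 0}$ is a resolving broadcast of $G$ if for all distinct $x,y\in V(G)$ there is $z\in V(G)$ with $f(z)=i>0$ and $d_i(x,z)\ne d_i(y,z)$. The broadcast dimension $\mathrm{bdim}(G)$ is the minimum of $\sum_{v\in V(G)}f(v)$ over all resolving broadcasts $f$ of $G$. *)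

From mathcomp Require Import all_boot.
From mathcomp Require Import boolp.
Set Implicit Arguments. Unset Strict Implicit. Unset Printing Implicit Defensive.

Section Graphs.
Variable T : finType.

Definition simple_graph (e : rel T) : Prop := symmetric e /\ irreflexive e.

(* ball e m x = set of vertices joined to x by a walk of length <= m,
   i.e. {y | d(x,y) <= m}. *)
Fixpoint ball (e : rel T) (m : nat) (x : T) : {set T} :=
  match m with
  | 0 => [set x]
  | m'.+1 => ball e m' x :|: [set y | [exists z in ball e m' x, e z y]]
  end.

(* d_k(x,y) = min{d(x,y), k+1}: the least m <= k with d(x,y) <= m, or k+1 if
   there is none (in particular if x,y lie in different components). *)
Definition dk (e : rel T) (k : nat) (x y : T) : nat :=
  find (fun m => y \in ball e m x) (iota 0 k.+1).

Definition adj_resolving (e : rel T) (A : {set T}) : Prop :=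
  forall x y : T, x != y -> exists2 z, z \in A & dk e 1 x z != dk e 1 y z.

Definition resolving_broadcast (e : rel T) (f : T -> nat) : Prop :=
  forall x y : T, x != y ->
    exists z : T, 0 < f z /\ dk e (f z) x z != dk e (f z) y z.

Lemma dk1_sep (e : rel T) (x y : T) : x != y -> dk e 1 x x != dk e 1 y x.
Proof.
move=> nxy; rewrite /dk /= !in_set1 eqxx /=.
by rewrite eq_sym (negbTE nxy).
Qed.

Lemma adj_resolving_setT (e : rel T) : adj_resolving e [set: T].
Proof. by move=> x y nxy; exists x; [rewrite in_setT | exact: dk1_sep]. Qed.

Lemma resolving_broadcast_ones (e : rel T) :
  resolving_broadcast e (fun _ => 1).
Proof. by move=> x y nxy; exists x; split => //; exact: dk1_sep. Qed.

Lemma adim_ex (e : rel T) :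
  exists a, `[< exists A : {set T}, adj_resolving e A /\ #|A| = a >].
Proof. by exists #|[set: T]|; apply/asboolP; exists [set: T]; split=> //; exact: adj_resolving_setT. Qed.

Lemma bdim_ex (e : rel T) :
  exists b, `[< exists f : {ffun T -> nat},
                  resolving_broadcast e f /\ \sum_(v : T) f v = b >].
Proof.
exists (\sum_(v : T) [ffun _ : T => 1] v); apply/asboolP.
exists [ffun _ => 1]; split=> //.
move=> x y nxy; exists x; rewrite ffunE; split=> //; exact: dk1_sep.
Qed.

Definition adim (e : rel T) : nat := ex_minn (adim_ex e).

Definition bdim (e : rel T) : nat := ex_minn (bdim_ex e).

End Graphs.

From Stdlib Require Import Reals Lra.
From mathcomp Require Import all_boot zify boolp.

(* Let f be a resolving broadcast of a graph on n vertices.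
   Record, for every vertex x, its profile: the vector of truncated
   distances d_{f(z)}(x, z) over the broadcasting vertices z (f(z) > 0).
   Since f resolves the graph, distinct vertices have distinct profiles.
   A coordinate with f(z) = k takes at most k + 2 <= 3^k values, so there are
   at most prod_z 3^{f(z)} = 3^{sum f} profiles, whence n <= 3^{bdim G}, i.e.
   bdim G >= log_3 n; no simplicity or size assumption is needed (c = 1/ln 3,
   N = 1).  The inequality adim G >= bdim G holds because the indicator
   function of an adjacency resolving set is a resolving broadcast of the
   same total weight. *)

Section BroadcastCounting.
Variables (T : finType) (e : rel T).

Lemma dk_le (k : nat) (x y : T) : dk e k x y <= k.+1.
Proof.
have := find_size (fun m => y \in ball e m x) (iota 0 k.+1).
by rewrite size_iota.
Qed.

(* Number of values a profile coordinate of a vertex broadcasting with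
   strength k can take: a single dummy value when k = 0, else k + 2. *)
Definition width (k : nat) : nat := if k is 0 then 1 else k.+2.

Lemma width_le_exp3 (k : nat) : width k <= 3 ^ k.
Proof.
case: k => // k; rewrite /width.
elim: k => // k IH; rewrite expnS; lia.
Qed.

Definition coord (f : T -> nat) (x z : T) : nat :=
  if f z is 0 then 0 else dk e (f z) x z.

Lemma coord_lt_width (f : T -> nat) (x z : T) : coord f x z < width (f z).
Proof. by rewrite /coord /width; case: (f z) => // k; rewrite ltnS dk_le. Qed.

Definition profile (f : T -> nat) (x : T) :
  {dffun forall z : T, 'I_(width (f z))} :=
  [ffun z => Ordinal (coord_lt_width f x z)].

Lemma profile_inj (f : T -> nat) :
  resolving_broadcast e f -> injective (profile f).
Proof.
move=> rf x y eq_xy; apply/eqP; apply: contraT => neq_xy.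
have [z [fz_gt0 sep]] := rf x y neq_xy.
have := congr1 (fun p : {dffun forall z, 'I_(width (f z))} => val (p z)) eq_xy.
rewrite /profile !ffunE /= /coord.
by case: (f z) fz_gt0 sep => // k _ /eqP.
Qed.

Lemma card_le_exp3_broadcast (f : T -> nat) :
  resolving_broadcast e f -> #|T| <= 3 ^ (\sum_(v : T) f v).
Proof.
move=> rf; have := leq_card (profile f) (profile_inj f rf).
rewrite card_dep_ffun foldrE big_map big_enum /= => /leq_trans; apply.
rewrite (big_morph (expn 3) (expnD 3) (expn0 3)).
by apply: leq_prod => z _; rewrite card_ord width_le_exp3.
Qed.

Lemma card_le_exp3_bdim : #|T| <= 3 ^ bdim e.
Proof.
rewrite /bdim; case: ex_minnP => b /asboolP [f [rf <-]] _.
exact: card_le_exp3_broadcast.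
Qed.

(* The indicator of an adjacency resolving set A is a resolving broadcast
   of weight #|A|, so bdim G <= adim G. *)
Lemma bdim_le_adim : bdim e <= adim e.
Proof.
rewrite /adim; case: ex_minnP => a /asboolP [A [rA <-]] _.
rewrite /bdim; case: ex_minnP => b _; apply; apply/asboolP.
exists [ffun z => nat_of_bool (z \in A)]; split.
- move=> x y neq_xy; have [z zA sep] := rA x y neq_xy.
  by exists z; rewrite ffunE zA.
- rewrite -sum1_card [RHS]big_mkcond /=.
  by apply: eq_bigr => z _; rewrite ffunE; case: (z \in A).
Qed.

End BroadcastCounting.

Lemma expn_pow (m n : nat) : m ^ n = Nat.pow m n.
Proof. by elim: n => // n IH; rewrite expnS IH mulnE. Qed.

Lemma ln_le_of_le_exp3 (n b : nat) :
  0 < n -> n <= 3 ^ b -> Rle (ln (INR n)) (Rmult (INR b) (ln 3)).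
Proof.
move=> /ltP n_gt0 /leP n_le.
have pos_n : Rlt 0 (INR n) by apply: lt_0_INR.
have n_le_pow : Rle (INR n) (pow 3 b).
  by rewrite (_ : IZR 3 = INR 3) -?pow_INR -?expn_pow; [apply: le_INR | rewrite /=; lra].
rewrite -ln_pow; last lra.
case: (Rle_lt_or_eq_dec _ _ n_le_pow) => [lt_pow | ->]; last lra.
exact/Rlt_le/ln_increasing.
Qed.

Theorem theorem3p11 :
  exists c : R, Rlt 0 c /\
  exists N : nat, forall (T : finType) (e : rel T),
    simple_graph e -> N <= #|T| ->
    bdim e <= adim e /\ Rle (Rmult c (ln (INR #|T|))) (INR (bdim e)).
Proof.
have ln3_gt0 : Rlt 0 (ln 3) by rewrite -ln_1; apply: ln_increasing; lra.
exists (Rinv (ln 3)); split; first exact: Rinv_0_lt_compat.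
exists 1%N => T e _ n_gt0; split; first exact: bdim_le_adim.
have ln_bound := @ln_le_of_le_exp3 _ _ n_gt0 (card_le_exp3_bdim T e).
apply: (Rmult_le_reg_l (ln 3)) => //.
by rewrite -Rmult_assoc Rinv_r ?Rmult_1_l; lra.
Qed.
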